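(* Let $P\ge 2$ be an integer, $m\in(-1,1)$, $\rho_o$ a real number such that $C^{out}=\rho_o\mathbf{1}\mathbf{1}^T+(1-\rho_o)I$ is positive semi-definite, and let $\delta_m>0$. Let $\delta M$ be a collection of real numbers $\delta M_{\mu\nu}$, $1\le\mu<\nu\le P$, with $|\delta M_{\mu\nu}|<\delta_m$, such that the symmetric matrix $C^{in}$ with $C^{in}_{\mu\mu}=1$ and $C^{in}_{\mu\nu}=C^{in}_{\nu\mu}=m+\delta M_{\mu\nu}$ for $\mu<\nu$ is a correlation matrix. Define $$\bar\epsilon_f[C^{in},C^{out}]=\left\lVert (C^{out})^{1/2}\left(I-(I+C^{in,U})^{-1}C^{in}\right)\right\rVert_F^2,$$ where $C^{in,U}$ is the strictly upper-triangular part of $C^{in}$ and $(C^{out})^{1/2}$ is the positive semi-definite square root of $C^{out}$, and let $\bar\epsilon_f[m,\rho_o]$ denote this quantity when all $\delta M_{\mu\nu}=0$. Then there are coefficients $G_{\mu\nu}$ depending only on $m$, $\rho_o$ and $P$ such that $$\bar\epsilon_f[C^{in},C^{out}]=\bar\epsilon_f[m,\rho_o]+2\sum_{\mu=1}^P\sum_{\nu=\mu+1}^P G_{\mu\nu}\,\delta M_{\mu\nu}+\mathcal{O}(\delta_m^2)\quad(\delta_m\to 0),$$ and, when $\rho_o=1$, $G_{\mu\nu}=G^+_{\mu\nu}+G^-_{\mu\nu}$ with $$G^+_{\mu\nu}=-(1-m)^{P+\mu-1}-(1-m)^{P+\nu-1}+\tfrac{3-m}{2-m}(1-m)^{\mu+\nu-1},$$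 $$G^-_{\mu\nu}=-\left(1-(1-m)^P\left(\tfrac{mP}{1-m}+\tfrac{3-m}{2-m}\right)\right)(1-m)^{P-(\nu-\mu)}.$$
   Context: $\mathbf{1}$ is the all-ones vector in $\mathbb{R}^P$, $I$ the $P\times P$ identity, and $\lVert\cdot\rVert_F$ the Frobenius norm. The function $\bar\epsilon_f[C^{in},C^{out}]$ is the asymptotic average final error of sequential (task-incremental) learning of $P$ linear regression tasks in a linear teacher–student model with input and output task-correlation matrices $C^{in}$, $C^{out}$, tasks learned in the order $1,\dots,P$. *)

From HB Require Import structures.
From mathcomp Require Import all_boot all_order all_algebra.
From mathcomp Require Import reals.
From Stdlib Require Import ClassicalEpsilon.
Set Implicit Arguments. Unset Strict Implicit. Unset Printing Implicit Defensive.
Import Order.TTheory GRing.Theory Num.Theory.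
Local Open Scope ring_scope.

Section Defs.
Variable R : realType.
Variable P : nat.

Definition psd (A : 'M[R]_P) : Prop :=
  A^T = A /\ forall x : 'cV[R]_P, 0 <= (x^T *m A *m x) 0 0.

Definition corr_matrix (A : 'M[R]_P) : Prop :=
  psd A /\ forall i, A i i = 1.

(* the positive semi-definite square root (chosen by epsilon; it is unique
   whenever it exists, and it exists for PSD matrices) *)
Definition psd_sqrt (A : 'M[R]_P) : 'M[R]_P :=
  epsilon (inhabits 0) (fun S : 'M[R]_P => psd S /\ S *m S = A).

Definition frob_norm (A : 'M[R]_P) : R :=
  Num.sqrt (\sum_(i < P) \sum_(j < P) A i j ^+ 2).

Definition strict_upper (A : 'M[R]_P) : 'M[R]_P :=
  \matrix_(i, j) (if (i < j)%N then A i j else 0).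

Definition eps_f (Cin Cout : 'M[R]_P) : R :=
  frob_norm (psd_sqrt Cout *m (1%:M - invmx (1%:M + strict_upper Cin) *m Cin)) ^+ 2.

Definition Cout_mat (rho : R) : 'M[R]_P := const_mx rho + (1 - rho)%:M.

(* C^in with C_{mu mu} = 1, C_{mu nu} = C_{nu mu} = m + dM_{mu nu} (mu < nu);
   only the entries dM i j with i < j are used *)
Definition Cin_mat (m : R) (dM : 'I_P -> 'I_P -> R) : 'M[R]_P :=
  \matrix_(i, j) (if i == j then 1
                  else if (i < j)%N then m + dM i j else m + dM j i).

(* G^+ and G^- with 0-based indices: mu = i+1, nu = j+1 *)
Definition Gplus (m : R) (i j : 'I_P) : R :=
  - (1 - m) ^+ (P + i) - (1 - m) ^+ (P + j)
  + (3 - m) / (2 - m) * (1 - m) ^+ (i + j + 1).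

Definition Gminus (m : R) (i j : 'I_P) : R :=
  - (1 - (1 - m) ^+ P * (m * P%:R / (1 - m) + (3 - m) / (2 - m)))
    * (1 - m) ^+ (P - (j - i)).

End Defs.

(* With [M(A, C) := I - A^-1 C] and [S] the square root of [C^out],
   [eps_f = |S M(I + U(C^in), C^in)|_F^2], [U] the strictly upper part.  Writing
   [C^in = C0 + dU + dU^T] with [dU] strictly upper holding the [dM], the pair
   [(A, C)] moves by [(dU, dU + dU^T)]; the resolvent identity splits [M] into
   [M0 + L + Q] with [L] linear and [Q] quadratic in [dM], and bounds in the
   submultiplicative entrywise l1 norm give [eps_f = eps_f0 + 2 <S M0, S L> + O(dm^2)],
   where [<S M0, S L> = sum_(i<j) G_ij dM_ij] by trace manipulations.  For [rho = 1],
   [S^T S = 1 1^T], so [G = w z^T - u w^T] with [w = A0^-T 1 = ((1-m)^k)_k],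
   [u = M0^T 1] and [z = - M0 u], all given by geometric sums. *)

From HB Require Import structures.
From mathcomp Require Import all_boot all_order all_algebra.
From mathcomp Require Import reals.
From mathcomp Require Import ring lra.
From Stdlib Require Import ClassicalEpsilon.
Set Implicit Arguments. Unset Strict Implicit. Unset Printing Implicit Defensive.
Import Order.TTheory GRing.Theory Num.Theory.
Local Open Scope ring_scope.

Section EntrywiseNorms.
Variable R : realFieldType.

Definition norm1 p q (A : 'M[R]_(p, q)) : R := \sum_i \sum_j `|A i j|.
Definition frob_dot p q (A B : 'M[R]_(p, q)) : R := \sum_i \sum_j A i j * B i j.
Definition frob_sq p q (A : 'M[R]_(p, q)) : R := frob_dot A A.

Lemma norm1_ge0 p q (A : 'M[R]_(p, q)) : 0 <= norm1 A.
Proof. by apply: sumr_ge0 => i _; apply: sumr_ge0. Qed.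

Lemma ler_norm1 p q (A : 'M[R]_(p, q)) i j : `|A i j| <= norm1 A.
Proof.
rewrite /norm1 (bigD1 i) //= (bigD1 j) //= -addrA lerDl.
by apply: addr_ge0; apply: sumr_ge0 => *; last apply: sumr_ge0.
Qed.

Lemma norm1D p q (A B : 'M[R]_(p, q)) : norm1 (A + B) <= norm1 A + norm1 B.
Proof.
rewrite -big_split; apply: ler_sum => i _; rewrite -big_split.
by apply: ler_sum => j _; rewrite mxE ler_normD.
Qed.

Lemma norm1N p q (A : 'M[R]_(p, q)) : norm1 (- A) = norm1 A.
Proof. by apply: eq_bigr => i _; apply: eq_bigr => j _; rewrite mxE normrN. Qed.

Lemma norm1_tr p q (A : 'M[R]_(p, q)) : norm1 A^T = norm1 A.
Proof.
by rewrite /norm1 exchange_big; apply: eq_bigr => i _; apply: eq_bigr => j _; rewrite mxE.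
Qed.

Lemma norm1B p q (A B : 'M[R]_(p, q)) : norm1 (A - B) <= norm1 A + norm1 B.
Proof. by rewrite -(norm1N B) norm1D. Qed.

Lemma norm1M p q r (A : 'M[R]_(p, q)) (B : 'M[R]_(q, r)) :
  norm1 (A *m B) <= norm1 A * norm1 B.
Proof.
rewrite mulr_suml; apply: ler_sum => i _; rewrite mulr_suml.
apply: (@le_trans _ _ (\sum_k \sum_j `|A i j| * `|B j k|)).
  apply: ler_sum => k _; rewrite mxE; apply: le_trans (ler_norm_sum _ _ _) _.
  by apply: ler_sum => j _; rewrite normrM.
rewrite exchange_big /=; apply: ler_sum => j _; rewrite -mulr_sumr.
apply: ler_wpM2l => //; rewrite [leRHS](bigD1 j) //= lerDl.
by apply: sumr_ge0 => *; apply: sumr_ge0.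
Qed.

Lemma norm1_le_const p q (A : 'M[R]_(p, q)) (d : R) :
  (forall i j, `|A i j| <= d) -> norm1 A <= (p * q)%:R * d.
Proof.
move=> Ad; apply: (@le_trans _ _ (\sum_(i < p) \sum_(j < q) d)).
  by apply: ler_sum => i _; apply: ler_sum.
by rewrite !sumr_const !card_ord -mulrnA mulr_natl mulnC.
Qed.

Lemma frob_dotDr p q (A B C : 'M[R]_(p, q)) :
  frob_dot A (B + C) = frob_dot A B + frob_dot A C.
Proof.
rewrite -big_split; apply: eq_bigr => i _; rewrite -big_split.
by apply: eq_bigr => j _; rewrite mxE mulrDr.
Qed.

Lemma frob_dotC p q (A B : 'M[R]_(p, q)) : frob_dot A B = frob_dot B A.
Proof. by apply: eq_bigr => i _; apply: eq_bigr => j _; rewrite mulrC. Qed.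

Lemma frob_sqD p q (A B : 'M[R]_(p, q)) :
  frob_sq (A + B) = frob_sq A + 2 * frob_dot A B + frob_sq B.
Proof.
rewrite /frob_sq frob_dotDr ![frob_dot (_ + _) _]frob_dotC !frob_dotDr.
by rewrite [frob_dot B A]frob_dotC; ring.
Qed.

Lemma frob_dot_le p q (A B : 'M[R]_(p, q)) :
  `|frob_dot A B| <= norm1 A * norm1 B.
Proof.
rewrite mulr_suml; apply: le_trans (ler_norm_sum _ _ _) _; apply: ler_sum => i _.
rewrite mulr_suml; apply: le_trans (ler_norm_sum _ _ _) _; apply: ler_sum => j _.
by rewrite normrM ler_wpM2l ?ler_norm1.
Qed.

Lemma frob_sq_ge0 p q (A : 'M[R]_(p, q)) : 0 <= frob_sq A.
Proof. by apply: sumr_ge0 => i _; apply: sumr_ge0 => j _; rewrite -expr2 sqr_ge0. Qed.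

Lemma frob_sq_le p q (A : 'M[R]_(p, q)) : frob_sq A <= norm1 A ^+ 2.
Proof. by rewrite expr2 (le_trans (ler_norm _) (frob_dot_le _ _)). Qed.

Lemma frob_dot_tr p q (A B : 'M[R]_(p, q)) : frob_dot A B = \tr (A^T *m B).
Proof.
rewrite /frob_dot exchange_big; apply: eq_bigr => j _; rewrite mxE.
by apply: eq_bigr => i _; rewrite mxE.
Qed.

Lemma frob_sq_expansion p q (B0 L Q : 'M[R]_(p, q)) :
  `|frob_sq (B0 + L + Q) - frob_sq B0 - 2 * frob_dot B0 L|
  <= 2 * norm1 B0 * norm1 Q + (norm1 L + norm1 Q) ^+ 2.
Proof.
rewrite -[B0 + L + Q]addrA frob_sqD frob_dotDr.
rewrite (_ : _ - _ - _ = 2 * frob_dot B0 Q + frob_sq (L + Q)); last by ring.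
rewrite (le_trans (ler_normD _ _)) // lerD //.
  by rewrite normrM ger0_norm // -mulrA ler_wpM2l ?frob_dot_le.
rewrite ger0_norm ?frob_sq_ge0 // (le_trans (frob_sq_le _)) //.
by rewrite lerXn2r ?nnegrE ?addr_ge0 ?norm1_ge0 ?norm1D.
Qed.

End EntrywiseNorms.

Lemma invmxB (R : comUnitRingType) n (A A0 : 'M[R]_n) :
  A \in unitmx -> A0 \in unitmx ->
  invmx A - invmx A0 = - (invmx A0 *m (A - A0) *m invmx A).
Proof.
move=> uA uA0; rewrite mulmxBr mulmxBl mulVmx // mul1mx -mulmxA mulmxV //.
by rewrite mulmx1 opprB.
Qed.

Definition res_mx (R : comUnitRingType) n (A C : 'M[R]_n) : 'M_n :=
  1%:M - invmx A *m C.

Definition dres_mx (R : comUnitRingType) n (A0 C0 F E : 'M[R]_n) : 'M_n :=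
  invmx A0 *m F *m invmx A0 *m C0 - invmx A0 *m E.

Lemma res_mx_expansion (R : comUnitRingType) n (A A0 C C0 : 'M[R]_n) :
  A \in unitmx -> A0 \in unitmx ->
  let X0 := invmx A0 in let D := invmx A - X0 in
  res_mx A C = res_mx A0 C0 + dres_mx A0 C0 (A - A0) (C - C0)
               + (X0 *m (A - A0) *m D *m C0 - D *m (C - C0)).
Proof.
move=> uA uA0 X0 D; rewrite /res_mx /dres_mx -/X0.
set F := A - A0; set E := C - C0.
have eX : invmx A = X0 + D by rewrite addrC subrK.
have eC : C = C0 + E by rewrite addrC subrK.
have eD : D *m C0 = - (X0 *m F *m X0 *m C0) - X0 *m F *m D *m C0.
  by rewrite {1}/D invmxB // eX mulmxDr opprD mulmxBl mulNmx.
clearbody F E D; rewrite eX eC mulmxDl !mulmxDr eD.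
by rewrite !opprD !opprK !addrA [_ - X0 *m E + _]addrAC.
Qed.

Section ResidualExpansion.
Variables (R : realFieldType) (n : nat) (A0 C0 : 'M[R]_n).
Hypothesis A0_unit : A0 \in unitmx.

Local Notation X0 := (invmx A0).
Local Notation x0 := (norm1 X0).

Lemma norm1_invmxB A : A \in unitmx -> 2 * x0 * norm1 (A - A0) <= 1 ->
  norm1 (invmx A - X0) <= 2 * x0 ^+ 2 * norm1 (A - A0).
Proof.
move=> uA small; set f := norm1 (A - A0).
have x0_ge0 : 0 <= x0 := norm1_ge0 _.
have f_ge0 : 0 <= f := norm1_ge0 _.
have X_ge0 : 0 <= norm1 (invmx A) := norm1_ge0 _.
have FX : norm1 (X0 *m (A - A0) *m invmx A) <= x0 * f * norm1 (invmx A).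
  by rewrite (le_trans (norm1M _ _)) // ler_wpM2r // norm1M.
(* [X = X0 - X0 F X] with [x0 |F| <= 1/2] *)
have X_le : norm1 (invmx A) <= 2 * x0.
  have : norm1 (invmx A) <= x0 + x0 * f * norm1 (invmx A).
    rewrite -{1}[invmx A](subrK X0) invmxB // addrC.
    by rewrite (le_trans (norm1D _ _)) // lerD // norm1N.
  have : 0 <= (1 - 2 * x0 * f) * norm1 (invmx A) by rewrite mulr_ge0 // subr_ge0.
  lra.
have : 0 <= x0 * f * (2 * x0 - norm1 (invmx A)) by rewrite !mulr_ge0 // subr_ge0.
rewrite invmxB // norm1N; nra.
Qed.

Local Notation c0 := (norm1 C0).

Lemma norm1_dres F E :
  norm1 (dres_mx A0 C0 F E) <= x0 * (x0 * c0 + 1) * (norm1 F + norm1 E).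
Proof.
have x0_ge0 : 0 <= x0 := norm1_ge0 _.
have c0_ge0 : 0 <= c0 := norm1_ge0 _.
have f_ge0 : 0 <= norm1 F := norm1_ge0 _.
have e_ge0 : 0 <= norm1 E := norm1_ge0 _.
have h1 : norm1 (X0 *m F *m X0 *m C0) <= x0 * norm1 F * x0 * c0.
  by do 3 rewrite (le_trans (norm1M _ _)) // ler_wpM2r //.
have h2 : norm1 (X0 *m E) <= x0 * norm1 E := norm1M _ _.
rewrite (le_trans (norm1B _ _)) // (le_trans (lerD h1 h2)) //.
rewrite -subr_ge0 (_ : _ - _ = x0 * x0 * c0 * norm1 E + x0 * norm1 F); last by ring.
by rewrite addr_ge0 ?mulr_ge0.
Qed.

Lemma norm1_res_remainder A C : A \in unitmx ->
  let F := A - A0 in let E := C - C0 in let D := invmx A - X0 in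
  2 * x0 * (norm1 F + norm1 E) <= 1 ->
  norm1 (X0 *m F *m D *m C0 - D *m E)
  <= 2 * x0 ^+ 2 * (x0 * c0 + 1) * (norm1 F + norm1 E) ^+ 2.
Proof.
move=> uA F E D small.
have x0_ge0 : 0 <= x0 := norm1_ge0 _.
have c0_ge0 : 0 <= c0 := norm1_ge0 _.
have f_ge0 : 0 <= norm1 F := norm1_ge0 _.
have e_ge0 : 0 <= norm1 E := norm1_ge0 _.
have d_ge0 : 0 <= norm1 D := norm1_ge0 _.
have d_le : norm1 D <= 2 * x0 ^+ 2 * (norm1 F + norm1 E).
  have : 2 * x0 * norm1 F <= 1 by nra.
  move/(norm1_invmxB uA)/le_trans; apply.
  by rewrite ler_wpM2l ?mulr_ge0 ?exprn_ge0 // lerDl.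
have h1 : norm1 (X0 *m F *m D *m C0) <= x0 * norm1 F * norm1 D * c0.
  by do 3 rewrite (le_trans (norm1M _ _)) // ler_wpM2r //.
have h2 : norm1 (D *m E) <= norm1 D * norm1 E := norm1M _ _.
rewrite (le_trans (norm1B _ _)) // (le_trans (lerD h1 h2)) //.
have lin : x0 * norm1 F * c0 + norm1 E <= (x0 * c0 + 1) * (norm1 F + norm1 E).
  rewrite -subr_ge0 (_ : _ - _ = x0 * c0 * norm1 E + norm1 F); last by ring.
  by rewrite addr_ge0 ?mulr_ge0.
move: d_le lin; set dl := norm1 F + norm1 E => d_le lin.
rewrite [leLHS](_ : _ = norm1 D * (x0 * norm1 F * c0 + norm1 E)); last by ring.
rewrite [leRHS](_ : _ = 2 * x0 ^+ 2 * dl * ((x0 * c0 + 1) * dl)); last by ring.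
by rewrite ler_pM ?addr_ge0 ?mulr_ge0.
Qed.

Lemma frob_sq_res_expansion r (S : 'M[R]_(r, n)) :
  exists2 K, 0 <= K & forall A C, A \in unitmx ->
  let d := norm1 (A - A0) + norm1 (C - C0) in d <= (2 * x0 + 1)^-1 ->
  `|frob_sq (S *m res_mx A C) - frob_sq (S *m res_mx A0 C0)
    - 2 * frob_dot (S *m res_mx A0 C0) (S *m dres_mx A0 C0 (A - A0) (C - C0))|
  <= K * d ^+ 2.
Proof.
set s := norm1 S; set b := norm1 (res_mx A0 C0); set a := x0 * c0 + 1.
have x0_ge0 : 0 <= x0 := norm1_ge0 _.
have s_ge0 : 0 <= s := norm1_ge0 _.
have b_ge0 : 0 <= b := norm1_ge0 _.
have a_ge0 : 0 <= a by rewrite addr_ge0 ?mulr_ge0 ?norm1_ge0.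
exists (s ^+ 2 * (2 * b * (2 * x0 ^+ 2 * a) + (x0 * a + 2 * x0 ^+ 2 * a) ^+ 2)).
  apply: mulr_ge0; first exact: exprn_ge0.
  apply: addr_ge0; first by rewrite !mulr_ge0 ?exprn_ge0.
  by rewrite exprn_ge0 // addr_ge0 ?mulr_ge0 ?exprn_ge0.
move=> A C uA d small.
have d_ge0 : 0 <= d by rewrite addr_ge0 ?norm1_ge0.
have [d_le1 d_small] : d <= 1 /\ 2 * x0 * d <= 1.
  have pos : 0 < 2 * x0 + 1 by rewrite ltr_wpDl ?mulr_ge0.
  have : d * (2 * x0 + 1) <= 1 by rewrite -ler_pdivlMr // div1r.
  by split; nra.
have nL : norm1 (S *m dres_mx A0 C0 (A - A0) (C - C0)) <= s * (x0 * a * d).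
  by rewrite (le_trans (norm1M _ _)) // ler_wpM2l // norm1_dres.
have nQ : norm1 (S *m (X0 *m (A - A0) *m (invmx A - X0) *m C0 - (invmx A - X0) *m (C - C0)))
    <= s * (2 * x0 ^+ 2 * a * d ^+ 2).
  by rewrite (le_trans (norm1M _ _)) // ler_wpM2l // norm1_res_remainder.
rewrite [in X in frob_sq X](res_mx_expansion C C0 uA A0_unit) /= mulmxDr.
rewrite [S *m (res_mx _ _ + _)]mulmxDr.
apply: le_trans (frob_sq_expansion _ _ _) _.
have nB : norm1 (S *m res_mx A0 C0) <= s * b := norm1M _ _.
have nQ1 : norm1 (S *m (X0 *m (A - A0) *m (invmx A - X0) *m C0
                       - (invmx A - X0) *m (C - C0))) <= s * (2 * x0 ^+ 2 * a * d).
  by rewrite (le_trans nQ) // ler_wpM2l // ler_wpM2l ?mulr_ge0 ?exprn_ge0 // expr2 ler_piMr.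
apply: le_trans (lerD (ler_pM _ _ (ler_wpM2l _ nB) nQ) (lerXn2r _ _ _ (lerD nL nQ1))) _;
  rewrite ?nnegrE ?addr_ge0 ?mulr_ge0 ?norm1_ge0 ?exprn_ge0 //.
rewrite -subr_ge0 (_ : _ - _ = 0) //; ring.
Qed.
End ResidualExpansion.

Definition upper_mx (R : nmodType) n (dM : 'I_n -> 'I_n -> R) : 'M_n :=
  \matrix_(i, j) if (i < j)%N then dM i j else 0.

Lemma mxtrace_mul_upper (R : pzSemiRingType) n (H : 'M[R]_n) dM :
  \tr (H *m upper_mx dM) = \sum_(i < n) \sum_(j < n | (i < j)%N) H j i * dM i j.
Proof.
rewrite /mxtrace; under eq_bigr do rewrite mxE.
rewrite exchange_big; apply: eq_bigr => i _; rewrite [RHS]big_mkcond.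
by apply: eq_bigr => j _; rewrite mxE; case: ifP; rewrite ?mulr0.
Qed.

Lemma mxtrace_mulTr (R : comPzRingType) m n (A B : 'M[R]_(m, n)) :
  \tr (A *m B^T) = \tr (A^T *m B).
Proof. by rewrite -mxtrace_tr trmx_mul trmxK mxtrace_mulC. Qed.

Lemma norm1_upper_mx (R : realFieldType) n (dM : 'I_n -> 'I_n -> R) dm :
  0 <= dm -> (forall i j : 'I_n, (i < j)%N -> `|dM i j| < dm) ->
  norm1 (upper_mx dM) <= (n * n)%:R * dm.
Proof.
move=> dm_ge0 small; apply: norm1_le_const => i j; rewrite mxE.
by case: ifP => [/small/ltW | _]; rewrite ?normr0.
Qed.

Definition res_grad (R : realFieldType) r n (S : 'M[R]_(r, n)) (A0 C0 : 'M[R]_n) :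
    'M[R]_n :=
  let H := (S *m res_mx A0 C0)^T *m S *m invmx A0 in
  - (res_mx A0 C0 *m H)^T - H.

Lemma frob_dot_dres_upper (R : realFieldType) r n (S : 'M[R]_(r, n)) A0 C0 dM :
  let U := upper_mx dM in
  frob_dot (S *m res_mx A0 C0) (S *m dres_mx A0 C0 U (U + U^T))
  = \sum_(i < n) \sum_(j < n | (i < j)%N) res_grad S A0 C0 i j * dM i j.
Proof.
move=> U; set H := (S *m res_mx A0 C0)^T *m S *m invmx A0.
have -> : \sum_(i < n) \sum_(j < n | (i < j)%N) res_grad S A0 C0 i j * dM i j
          = \tr ((invmx A0 *m C0 *m H - H - H^T) *m U).
  rewrite mxtrace_mul_upper; apply: eq_bigr => i _; apply: eq_bigr => j _.
  by rewrite /res_grad -/H /res_mx mulmxBl mul1mx -mulmxA !mxE; ring.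
rewrite /H /dres_mx frob_dot_tr; move: (S *m res_mx A0 C0)^T (invmx A0) => B X0.
rewrite !(mulmxBr, mulmxDr, mulmxN) ![in X in X = _]mulmxA.
move: (B *m S *m X0) => K.
rewrite !mulmxBl !linearB linearD /= mxtrace_mulTr -[K *m U *m X0 *m C0]mulmxA.
by rewrite mxtrace_mulC !mulmxA opprD addrA.
Qed.

Lemma res_grad_rank_one (R : realFieldType) r n (S : 'M[R]_(r, n)) A0 C0
    (v : 'cV[R]_n) :
  S^T *m S = v *m v^T ->
  let a := (res_mx A0 C0)^T *m v in let b := (invmx A0)^T *m v in
  res_grad S A0 C0 = - (b *m (res_mx A0 C0 *m a)^T) - a *m b^T.
Proof.
move=> SS a b; have H : (S *m res_mx A0 C0)^T *m S *m invmx A0 = a *m b^T.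
  by rewrite trmx_mul -(mulmxA _ S^T S) SS /a /b trmx_mul trmxK !mulmxA.
by rewrite /res_grad H mulmxA trmx_mul trmxK.
Qed.

Section Perturbation.
Variables (R : realType) (P : nat).
Implicit Types (C : 'M[R]_P) (dM : 'I_P -> 'I_P -> R).

Lemma unitmx_1_strict_upper C : 1%:M + strict_upper C \in unitmx.
Proof.
rewrite unitmxE -det_tr det_trig.
  by rewrite big1 ?unitr1 // => i _; rewrite !mxE eqxx ltnn addr0.
apply/is_trig_mxP => i j lt_ij; rewrite !mxE ltnNge (ltnW lt_ij) addr0.
by case: eqP lt_ij => // ->; rewrite ltnn.
Qed.

Lemma strict_upperD C dM :
  strict_upper (C + upper_mx dM + (upper_mx dM)^T) = strict_upper C + upper_mx dM.
Proof.
apply/matrixP => i j; rewrite !mxE.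
by case: ltnP => [lt_ij | _]; rewrite ?addr0 // ltnNge (ltnW lt_ij) addr0.
Qed.

Lemma Cin_matE (m : R) dM :
  Cin_mat m dM = Cin_mat m (fun _ _ => 0) + upper_mx dM + (upper_mx dM)^T.
Proof.
apply/matrixP => i j; rewrite !mxE.
case: (ltngtP i j) => [lt_ij | lt_ji | /val_inj->]; last by rewrite eqxx !addr0.
  by case: eqP lt_ij => [->|_]; rewrite ?ltnn // !addr0.
by case: eqP lt_ji => [->|_]; rewrite ?ltnn // !addr0.
Qed.

Lemma eps_fE (Cin Cout : 'M[R]_P) :
  eps_f Cin Cout = frob_sq (psd_sqrt Cout *m res_mx (1%:M + strict_upper Cin) Cin).
Proof. by rewrite /eps_f /frob_norm sqr_sqrtr // frob_sq_ge0. Qed.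

Lemma eps_f_upper_expansion (C0 Cout : 'M[R]_P) :
  let S := psd_sqrt Cout in let A0 := 1%:M + strict_upper C0 in
  exists K d0 : R, 0 < d0 /\
    forall (dm : R) dM, 0 < dm -> dm < d0 ->
      (forall i j : 'I_P, (i < j)%N -> `|dM i j| < dm) ->
      `|eps_f (C0 + upper_mx dM + (upper_mx dM)^T) Cout - eps_f C0 Cout
        - 2 * \sum_(i < P) \sum_(j < P | (i < j)%N) res_grad S A0 C0 i j * dM i j|
      <= K * dm ^+ 2.
Proof.
move=> S A0.
have [K K_ge0 expand] := frob_sq_res_expansion C0 (unitmx_1_strict_upper C0) S.
set x0 := norm1 (invmx A0); set c : R := 3 * (P * P)%:R + 1.
have x0_ge0 : 0 <= x0 := norm1_ge0 _.
have c_gt0 : 0 < c by rewrite ltr_wpDl ?mulr_ge0.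
exists (K * c ^+ 2), (c * (2 * x0 + 1))^-1; split.
  by rewrite invr_gt0 mulr_gt0 // ltr_wpDl ?mulr_ge0.
move=> dm dM dm_gt0 dm_lt small.
set U := upper_mx dM; set C := C0 + U + U^T.
(* [(A, C)] moves by [(U, U + U^T)], of total [norm1]-size at most [3 P^2 dm] *)
have AB : (1%:M + strict_upper C) - A0 = U.
  by rewrite /C strict_upperD addrA -/A0 addrAC subrr add0r.
have CB : C - C0 = U + U^T by rewrite /C -[C0 + U + _]addrA addrAC subrr add0r.
have nU : norm1 U <= (P * P)%:R * dm := norm1_upper_mx (ltW dm_gt0) small.
have d_le : norm1 U + norm1 (U + U^T) <= c * dm.
  have := norm1D U U^T; rewrite norm1_tr /c mulrDl mul1r -mulrA; lra.
have d_small : norm1 U + norm1 (U + U^T) <= (2 * x0 + 1)^-1.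
  rewrite (le_trans d_le) // (le_trans (ler_wpM2l (ltW c_gt0) (ltW dm_lt))) //.
  by rewrite invfM mulrA mulfV ?mul1r // gt_eqF.
have := expand _ C (unitmx_1_strict_upper C) _; rewrite AB CB => /(_ d_small).
rewrite frob_dot_dres_upper -!eps_fE => /le_trans; apply.
rewrite -mulrA -exprMn ler_wpM2l // lerXn2r ?nnegrE ?addr_ge0 ?norm1_ge0 //.
by rewrite mulr_ge0 // ltW.
Qed.

End Perturbation.

Lemma geom_sum (R : comPzRingType) (r : R) a b : (a <= b)%N ->
  (1 - r) * \sum_(a <= k < b) r ^+ k = r ^+ a - r ^+ b.
Proof.
elim: b => [|b IH]; first by rewrite leqn0 => /eqP->; rewrite big_geq // mulr0 subrr.
rewrite leq_eqVlt => /predU1P[<-|]; first by rewrite big_geq // mulr0 subrr.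
by rewrite ltnS => le_ab; rewrite big_nat_recr //= mulrDr IH // exprS; ring.
Qed.

Lemma sum_ord_lt (R : nmodType) n v (f : nat -> R) : (v <= n)%N ->
  \sum_(k < n | (k < v)%N) f k = \sum_(0 <= k < v) f k.
Proof. by move=> le_vn; rewrite (big_nat_widen _ _ _ _ _ le_vn) big_mkord. Qed.

Lemma sum_ord_gt (R : nmodType) n v (f : nat -> R) : (v < n)%N ->
  \sum_(k < n | (v < k)%N) f k = \sum_(v.+1 <= k < n) f k.
Proof.
move=> lt_vn; rewrite -big_mkord (big_cat_nat (leq0n v.+1) lt_vn) /=.
rewrite big_nat_cond big_pred0 => [|k]; last by rewrite ltnS; case: leqP; rewrite ?andbF.
rewrite add0r big_nat_cond [RHS]big_nat_cond; apply: eq_bigl => k.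
by rewrite andbT andb_idr // => /andP[].
Qed.

Lemma mul_const_mx (R : pzSemiRingType) m n p (a b : R) :
  (const_mx a : 'M[R]_(m, n)) *m (const_mx b : 'M[R]_(n, p)) = const_mx (a * b *+ n).
Proof.
apply/matrixP => i j; rewrite !mxE (eq_bigr (fun _ => a * b)) ?sumr_const ?card_ord //.
by move=> k _; rewrite !mxE.
Qed.

Lemma psd_const_mx (R : realType) P (c : R) : 0 <= c -> psd (const_mx c : 'M[R]_P).
Proof.
move=> c_ge0; split; first exact: trmx_const.
move=> x; rewrite -mulmxA (_ : const_mx c *m x = const_mx (c * \sum_k x k 0)).
  rewrite mxE (eq_bigr (fun k => c * (\sum_k x k 0) * x k 0)) => [|k _]; last first.
    by rewrite !mxE mulrC.
  by rewrite -mulr_sumr -mulrA -expr2 mulr_ge0 ?sqr_ge0.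
apply/matrixP => i j; rewrite !mxE mulr_sumr.
by apply: eq_bigr => k _; rewrite mxE (ord1 j).
Qed.

Lemma psd_sqrt_spec (R : realType) P (A : 'M[R]_P) :
  (exists S, psd S /\ S *m S = A) -> psd (psd_sqrt A) /\ psd_sqrt A *m psd_sqrt A = A.
Proof. exact: epsilon_spec. Qed.

Lemma psd_sqrt_ones (R : realType) P : (0 < P)%N ->
  let S := psd_sqrt (Cout_mat P (1 : R)) in S^T *m S = const_mx 1.
Proof.
move=> P_gt0 S; have ones : Cout_mat P (1 : R) = const_mx 1.
  by apply/matrixP => i j; rewrite !mxE subrr mul0rn addr0.
have P_gt0' : (0 : R) < P%:R by rewrite ltr0n.
have [[S_sym _] SS] : psd S /\ S *m S = Cout_mat P 1.
  apply: psd_sqrt_spec; exists (const_mx (Num.sqrt P%:R)^-1); split.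
    by apply: psd_const_mx; rewrite invr_ge0 sqrtr_ge0.
  rewrite mul_const_mx ones -mulr_natr -expr2 exprVn sqr_sqrtr ?ler0n //.
  by rewrite mulVf ?gt_eqF.
by rewrite S_sym SS ones.
Qed.

Section FullyCorrelatedOutputs.
Variables (R : realType) (P : nat) (m : R).
Hypothesis m_lt1 : m < 1.

Local Notation q := (1 - m).
Local Notation C0 := (Cin_mat m (fun _ _ => 0) : 'M[R]_P).
Local Notation A0 := (1%:M + strict_upper C0).

Let q_neq0 : q != 0. Proof. by rewrite gt_eqF // subr_gt0. Qed.
Let two_sub_m_neq0 : 2 - m != 0.
Proof. by rewrite gt_eqF // subr_gt0 (lt_trans m_lt1) ?ltr1n. Qed.

Lemma Cin_mat0E i j : C0 i j = if i == j then 1 else m.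
Proof. by rewrite mxE; case: eqP => //; case: ifP => _; rewrite addr0. Qed.

Lemma unit_upper0E i j : A0 i j = if i == j then 1 else if (i < j)%N then m else 0.
Proof.
rewrite !mxE; case: eqP => [->|_]; first by rewrite ltnn addr0.
by rewrite mulr0n add0r addr0 if_same.
Qed.

Lemma geom_sum_q a b : (a <= b)%N ->
  m * \sum_(a <= k < b) q ^+ k = q ^+ a - q ^+ b.
Proof. by move=> le_ab; rewrite -{1}(subKr 1 m) geom_sum. Qed.

Definition geom_col : 'cV[R]_P := \col_k q ^+ k.
Definition u_seq (k : nat) : R := q ^+ P - q ^+ k.+1.
Definition z_coef : R := 1 - q ^+ P * (m * P%:R / q + (3 - m) / (2 - m)).
Definition z_seq (k : nat) : R :=
  - q ^+ P + q ^+ k.+1 / (2 - m) - z_coef * q ^+ P / q ^+ k.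
Definition u_col : 'cV[R]_P := \col_k u_seq k.
Definition z_col : 'cV[R]_P := \col_k z_seq k.

Lemma trmx_unit_upper0_geom : A0^T *m geom_col = const_mx 1.
Proof.
apply/matrixP => j z; rewrite !mxE.
under eq_bigr => k _ do rewrite [_^T _ _]mxE unit_upper0E mxE.
rewrite (bigD1 j) //= eqxx mul1r.
rewrite (eq_bigr (fun k : 'I_P => if (k < j)%N then m * q ^+ k else 0)); last first.
  by move=> k /negPf->; case: ifP; rewrite ?mul0r.
rewrite -big_mkcondr (eq_bigl (fun k : 'I_P => (k < j)%N)) => [|k]; last first.
  by case: eqP => [->|]; rewrite ?ltnn.
rewrite (sum_ord_lt (fun k => m * q ^+ k)) 1?ltnW // -mulr_sumr.
by rewrite geom_sum_q // expr0 addrC subrK.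
Qed.

Lemma Cin_mat0_geom : C0 *m geom_col = const_mx 1 - u_col.
Proof.
apply/matrixP => i z; rewrite [LHS]mxE [RHS]mxE !mxE.
rewrite (eq_bigr (fun k : 'I_P => m * q ^+ k + (if k == i then q ^+ k.+1 else 0)));
  last by move=> k _; rewrite Cin_mat0E mxE eq_sym; case: eqP => _; rewrite ?exprS; ring.
rewrite big_split -big_mkcond big_pred1_eq /= -mulr_sumr.
rewrite -(big_mkord xpredT (fun k => q ^+ k)).
rewrite geom_sum_q // expr0 /u_seq; ring.
Qed.

Lemma z_seq_recursion v : (v < P)%N ->
  z_seq v + \sum_(v.+1 <= k < P) m * z_seq k = \sum_(0 <= k < v) m * u_seq k.
Proof.
move=> lt_vP; have qk_neq0 k : q ^+ k != 0 by rewrite expf_neq0.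
have sum_z : \sum_(v.+1 <= k < P) m * z_seq k
    = \sum_(v.+1 <= k < P) - (m * q ^+ P)
      + q / (2 - m) * (m * \sum_(v.+1 <= k < P) q ^+ k)
      - z_coef * q ^+ P * (m * \sum_(v.+1 <= k < P) q^-1 ^+ k).
  rewrite !mulr_sumr -big_split -sumrB /=; apply: eq_bigr => k _.
  by rewrite /z_seq exprVn exprS; field; rewrite qk_neq0.
have sum_u : \sum_(0 <= k < v) m * u_seq k
    = \sum_(0 <= k < v) m * q ^+ P - q * (m * \sum_(0 <= k < v) q ^+ k).
  by rewrite !mulr_sumr -sumrB; apply: eq_bigr => k _; rewrite /u_seq exprS; ring.
(* the [q^(P-k)] part of [z_seq] is a geometric sum of ratio [q^-1] *)
have sum_inv : m * \sum_(v.+1 <= k < P) q^-1 ^+ k = - q * (q^-1 ^+ v.+1 - q^-1 ^+ P).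
  by rewrite -geom_sum // mulrA; congr (_ * _); field.
rewrite sum_z sum_u sum_inv !geom_sum_q // !sumr_const_nat subn0.
rewrite -(mulr_natr _ (P - _)) -(mulr_natr _ v) natrB // !exprVn.
rewrite /z_seq /z_coef expr0 [v.+1%:R]mulrSr !exprS.
by field; rewrite !qk_neq0 q_neq0.
Qed.

Lemma unit_upper0_z : A0 *m z_col = (C0 - A0) *m u_col.
Proof.
apply/matrixP => v z; rewrite (ord1 z) [LHS]mxE [RHS]mxE.
rewrite (eq_bigr (fun k : 'I_P => (if k == v then z_seq k else 0)
                   + (if (v < k)%N then m * z_seq k else 0))); last first.
  move=> k _; rewrite [z_col _ _]mxE unit_upper0E eq_sym; case: eqP => [->|_].
    by rewrite ltnn mul1r addr0.
  by case: ifP => _; rewrite ?mul0r ?add0r.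
rewrite [RHS](eq_bigr (fun k : 'I_P => if (k < v)%N then m * u_seq k else 0)); last first.
  move=> k _; rewrite mxE [X in _ + X]mxE unit_upper0E Cin_mat0E [u_col _ _]mxE.
  case: (ltngtP k v) => [lt_kv | lt_vk | /val_inj->]; last by rewrite eqxx subrr mul0r.
    rewrite (_ : v == k = false) ?subr0 //.
    by apply/eqP => vk; rewrite vk ltnn in lt_kv.
  by rewrite subrr mul0r.
rewrite big_split -!big_mkcond big_pred1_eq /= (sum_ord_gt (fun k => m * z_seq k)) //.
by rewrite (sum_ord_lt (fun k => m * u_seq k)) 1?ltnW // z_seq_recursion.
Qed.

Lemma res_grad_ones : (0 < P)%N ->
  res_grad (psd_sqrt (Cout_mat P 1)) A0 C0 = geom_col *m z_col^T - u_col *m geom_col^T.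
Proof.
move=> P_gt0; have uA0 := unitmx_1_strict_upper C0.
set ones : 'cV[R]_P := const_mx 1.
have SS : (psd_sqrt (Cout_mat P 1))^T *m psd_sqrt (Cout_mat P 1) = ones *m ones^T.
  by rewrite psd_sqrt_ones // trmx_const mul_const_mx mulr1.
have b_geom : (invmx A0)^T *m ones = geom_col.
  by rewrite /ones -trmx_unit_upper0_geom mulmxA -trmx_mul mulmxV // trmx1 mul1mx.
have C0_sym : C0^T = C0.
  by apply/matrixP => i j; rewrite mxE !Cin_mat0E eq_sym.
have a_u : (res_mx A0 C0)^T *m ones = u_col.
  rewrite /res_mx linearB /= trmx1 trmx_mul C0_sym mulmxBl mul1mx -mulmxA b_geom.
  by rewrite Cin_mat0_geom subKr.
have M0u : res_mx A0 C0 *m u_col = - z_col.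
  rewrite /res_mx mulmxBl mul1mx -mulmxA -[C0 in C0 *m u_col](subrK A0) mulmxDl.
  by rewrite -unit_upper0_z mulmxDr !mulmxA mulVmx // !mul1mx opprD addrCA subrr addr0.
rewrite (res_grad_rank_one _ _ SS) /= a_u b_geom M0u.
by rewrite linearN /= mulmxN opprK.
Qed.

Lemma res_grad_ones_entry (i j : 'I_P) : (i < j)%N ->
  res_grad (psd_sqrt (Cout_mat P 1)) A0 C0 i j = Gplus m i j + Gminus m i j.
Proof.
move=> lt_ij; have q_unit : q \is a GRing.unit by rewrite unitfE.
rewrite res_grad_ones ?(leq_ltn_trans _ (ltn_ord j)) // !mxE !big_ord1 !mxE.
rewrite /Gplus /Gminus /z_seq /u_seq /z_coef.
rewrite (exprB (leq_trans (leq_subr i j) (ltnW (ltn_ord j))) q_unit).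
rewrite (exprB (ltnW lt_ij) q_unit) !exprD !exprS.
by field; rewrite two_sub_m_neq0 q_neq0 !expf_neq0.
Qed.

End FullyCorrelatedOutputs.

Theorem theorem2 (R : realType) (P : nat) (m rho : R) :
  (2 <= P)%N -> -1 < m -> m < 1 -> psd (Cout_mat P rho) ->
  exists G : 'I_P -> 'I_P -> R,
    (rho = 1 -> forall i j : 'I_P, (i < j)%N -> G i j = Gplus m i j + Gminus m i j) /\
    exists K d0 : R, 0 < d0 /\
      forall (dm : R) (dM : 'I_P -> 'I_P -> R),
        0 < dm -> dm < d0 ->
        (forall i j : 'I_P, (i < j)%N -> `|dM i j| < dm) ->
        corr_matrix (Cin_mat m dM) ->
        `| eps_f (Cin_mat m dM) (Cout_mat P rho)
           - eps_f (Cin_mat m (fun _ _ => 0)) (Cout_mat P rho)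
           - 2 * \sum_(i < P) \sum_(j < P | (i < j)%N) G i j * dM i j |
        <= K * dm ^+ 2.
Proof.
(* Only [m < 1] is used: the expansion holds for any matrix in place of the square
   root of [C^out], and for any perturbation, correlation matrix or not. *)
move=> _ _ m_lt1 _; set C0 := Cin_mat m (fun _ _ => 0).
have [K [d0 [d0_gt0 expansion]]] := eps_f_upper_expansion C0 (Cout_mat P rho).
exists (res_grad (psd_sqrt (Cout_mat P rho)) (1%:M + strict_upper C0) C0); split.
  by move=> rho1 i j; rewrite rho1; exact: res_grad_ones_entry.
exists K, d0; split => // dm dM dm_gt0 dm_lt small _.
by rewrite Cin_matE; exact: expansion.
Qed.
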